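(* Let $k$ be a field and let $H$ be an induced subgraph of the graph $G$ such that the complement graph $H^c$ is disconnected. Then $\operatorname{pd}^k(G)\geqslant |V(H)|-1$.
   Context: A graph is a finite simple graph with nonempty vertex set. For a graph $G$ with vertices $x_1,\dots,x_n$, $R_k(G)=k[x_1,\dots,x_n]$, $I(G)$ is the ideal generated by $x_ix_j$ for all edges $\{x_i,x_j\}$, and $\operatorname{pd}^k(G)$ is the projective dimension of the $R_k(G)$-module $R_k(G)/I(G)$. For a graph $H$, $H^c$ is the simple graph on the same vertex set in which two distinct vertices are adjacent iff they are not adjacent in $H$. An induced subgraph on a vertex subset $W$ has vertex set $W$ and all edges of $G$ with both ends in $W$. *)

From HB Require Import structures.
From mathcomp Require Import all_boot all_order all_algebra.
From mathcomp Require Import fingraph.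
From mathcomp Require Import mpoly.
Set Implicit Arguments. Unset Strict Implicit. Unset Printing Implicit Defensive.
Import GRing.Theory.
Local Open Scope ring_scope.

Definition projective_mod (R : comNzRingType) (P : lmodType R) : Prop :=
  forall (M N : lmodType R) (f : {linear M -> N}) (g : {linear P -> N}),
    (forall y : N, exists x : M, f x = y) ->
    exists h : {linear P -> M}, forall p : P, f (h p) = g p.

(* There is a projective resolution
     ... -> P_2 -> P_1 -> P_0 -> R/I -> 0
   of the cyclic module R/I with P_i = 0 for i > m (length <= m).
   The augmentation P_0 -> R/I is given by an R-linear lift
   eps : P_0 -> R composed with the projection R -> R/I. *)
Definition has_proj_res_of_length (R : comNzRingType) (I : R -> Prop) (m : nat)
  : Prop :=
  exists (P : nat -> lmodType R) (d : forall i, {linear P i.+1 -> P i})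
         (eps : {linear P 0%N -> R^o}),
    [/\ (forall i, projective_mod (P i)),
        (forall i, (m < i)%N -> forall x : P i, x = 0),
        (forall r : R, exists x : P 0%N, I ((eps x : R) - r)),
        (forall x : P 0%N, I (eps x : R) <-> exists y, d 0%N y = x) &
        (forall i (x : P i.+1), d i x = 0 <-> exists y, d i.+1 y = x)].

(* pd_R(R/I) >= n : every projective resolution of R/I has length >= n
   (this includes the case pd = infinity). *)
Definition pd_ge (R : comNzRingType) (I : R -> Prop) (n : nat) : Prop :=
  forall m, has_proj_res_of_length I m -> (n <= m)%N.

Definition simple_graph (n : nat) (e : rel 'I_n) : Prop :=
  (0 < n)%N /\ irreflexive e /\ ssrbool.symmetric e.

Definition edge_ideal (k : fieldType) (n : nat) (e : rel 'I_n)
  : {mpoly k[n]} -> Prop :=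
  fun p => exists c : 'I_n -> 'I_n -> {mpoly k[n]},
             p = \sum_(i : 'I_n) \sum_(j : 'I_n | e i j)
                   c i j * ('X_i * 'X_j).

Definition compl_induced_adj (n : nat) (e : rel 'I_n) (W : {set 'I_n})
  : rel 'I_n :=
  fun x y => [&& x \in W, y \in W, x != y & ~~ e x y].

Definition compl_induced_disconnected (n : nat) (e : rel 'I_n)
  (W : {set 'I_n}) : Prop :=
  exists u v, [/\ u \in W, v \in W & ~~ connect (compl_induced_adj e W) u v].

From HB Require Import structures.
From mathcomp Require Import all_boot all_order all_algebra.
From mathcomp Require Import mpoly.
From mathcomp Require finmap monalg.
Set Implicit Arguments. Unset Strict Implicit. Unset Printing Implicit Defensive.
Import GRing.Theory.
Local Open Scope ring_scope.

(* Let A be the connected component of a vertex in the complement of G[W] and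
   B = W - A; both are nonempty, and every vertex of A is adjacent in G to
   every vertex of B.  The variables of A followed by those of B form a
   regular sequence, so their Koszul complex K is exact, and a staircase
   argument comparing K with a projective resolution of R/I of length m shows
   that every chain of K of degree > m which is a cycle modulo I is a boundary
   modulo I (this is Tor_j(R/I, R/(x_W)) = 0 for j > m).  But z = d(e_A) /\ e_B
   has degree |W| - 1 and is a cycle modulo I, since x_b (x_a : a in A) is
   contained in I for b in B.  If z were d u modulo I, the coefficients of e_W
   and of e_(A - a) /\ e_B (a the last vertex of A) would give x_b t and
   +-x_a t - x_a in I, t the e_W-coefficient of u; as I has no linear terms,
   the first forces t(0) = 0 and then the second has linear term -x_a. *)

Section KoszulComplex.
Variable R : comNzRingType.
Variable y : nat -> R.

(* [koszul V w] is the Koszul complex of y_0, ..., y_(w-1) with coefficients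
   in V, all degrees at once: a chain (a, b) of [koszul V w.+1] stands for
   a + e_w /\ b, so the degree d part of b lies in degree d + 1. *)
Fixpoint koszul (V : lmodType R) (w : nat) : lmodType R :=
  if w is w'.+1 then (koszul V w' * koszul V w')%type else V.

Fixpoint kdiff (V : lmodType R) (w : nat) : koszul V w -> koszul V w :=
  match w with
  | 0 => fun _ => 0
  | w'.+1 => fun c => (kdiff c.1 + y w' *: c.2, - kdiff c.2)
  end.

Fixpoint kmap (V U : lmodType R) (f : V -> U) (w : nat) :
    koszul V w -> koszul U w :=
  match w with
  | 0 => f
  | w'.+1 => fun c => (kmap f c.1, kmap f c.2)
  end.

Fixpoint kall (V : lmodType R) (P : V -> Prop) (w : nat) : koszul V w -> Prop :=
  match w with
  | 0 => P
  | w'.+1 => fun c => kall P c.1 /\ kall P c.2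
  end.

Fixpoint kall2 (V U : lmodType R) (P : V -> U -> Prop) (w : nat) :
    koszul V w -> koszul U w -> Prop :=
  match w with
  | 0 => P
  | w'.+1 => fun c c' => kall2 P c.1 c'.1 /\ kall2 P c.2 c'.2
  end.

Fixpoint kdeg_ge (V : lmodType R) (s w : nat) : koszul V w -> Prop :=
  match w with
  | 0 => fun c => if s is 0 then True else c = 0
  | w'.+1 => fun c => kdeg_ge s c.1 /\ kdeg_ge s.-1 c.2
  end.

Fixpoint kdeg0 (V : lmodType R) (w : nat) : koszul V w -> V :=
  match w with
  | 0 => id
  | w'.+1 => fun c => kdeg0 c.1
  end.

Fixpoint kpos (V : lmodType R) (w : nat) : koszul V w -> koszul V w :=
  match w with
  | 0 => fun _ => 0
  | w'.+1 => fun c => (kpos c.1, c.2)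
  end.

Fixpoint kscalar (V : lmodType R) (w : nat) (v : V) : koszul V w :=
  if w is w'.+1 then (kscalar w' v, 0) else v.

Section Chains.
Variable V : lmodType R.

Lemma koszul_sum_pair w (I : Type) (r : seq I) (F1 F2 : I -> koszul V w) :
  \sum_(i <- r) ((F1 i, F2 i) : koszul V w.+1) =
  (\sum_(i <- r) F1 i, \sum_(i <- r) F2 i).
Proof. by elim: r => [|i r IH]; rewrite ?big_nil ?big_cons ?IH. Qed.

Lemma kdiffD w (a b : koszul V w) : kdiff (a + b) = kdiff a + kdiff b.
Proof.
elim: w a b => [|w IH] /=; first by rewrite addr0.
by case=> [a1 a2] [b1 b2] /=; rewrite !IH scalerDr opprD addrACA.
Qed.

Lemma kdiffZ w r (a : koszul V w) : kdiff (r *: a) = r *: kdiff a.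
Proof.
elim: w a => [|w IH] /=; first by rewrite scaler0.
case=> [a1 a2] /=; rewrite !IH; congr (_, _) => /=.
  by rewrite scalerDr !scalerA mulrC.
by rewrite scalerN.
Qed.

Lemma kdiff0 w : kdiff (0 : koszul V w) = 0.
Proof. by have := kdiffZ 0 (0 : koszul V w); rewrite !scale0r. Qed.

Lemma kdiffN w (a : koszul V w) : kdiff (- a) = - kdiff a.
Proof. by rewrite -scaleN1r kdiffZ scaleN1r. Qed.

Lemma kdiffB w (a b : koszul V w) : kdiff (a - b) = kdiff a - kdiff b.
Proof. by rewrite kdiffD kdiffN. Qed.

Lemma kdiff_kdiff w (a : koszul V w) : kdiff (kdiff a) = 0.
Proof.
elim: w a => [|w IH] //= [a1 a2] /=.
by rewrite kdiffD kdiffZ !kdiffN !IH add0r scalerN addrN !oppr0.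
Qed.

Lemma kdeg0D w (a b : koszul V w) : kdeg0 (a + b) = kdeg0 a + kdeg0 b.
Proof. by elim: w a b => [|w IH] //= [a1 a2] [b1 b2]; apply: IH. Qed.

Lemma kdeg0Z w r (a : koszul V w) : kdeg0 (r *: a) = r *: kdeg0 a.
Proof. by elim: w a => [|w IH] //= [a1 a2]; apply: IH. Qed.

Lemma kdeg00 w : kdeg0 (0 : koszul V w) = 0.
Proof. by have := kdeg0Z 0 (0 : koszul V w); rewrite !scale0r. Qed.

Lemma kdeg0N w (a : koszul V w) : kdeg0 (- a) = - kdeg0 a.
Proof. by rewrite -scaleN1r kdeg0Z scaleN1r. Qed.

Lemma kdeg0_kscalar w (v : V) : kdeg0 (kscalar w v) = v.
Proof. by elim: w. Qed.

Lemma kdeg0_kpos w (a : koszul V w) : kdeg0 (kpos a) = 0.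
Proof. by elim: w a => [|w IH] //= [a1 a2]; apply: IH. Qed.

Lemma kdiff_kpos w (a : koszul V w) : kdiff (kpos a) = kdiff a.
Proof. by elim: w a => [|w IH] //= [a1 a2] /=; rewrite IH. Qed.

Lemma koszul_trivial w (a : koszul V w) : (forall v : V, v = 0) -> a = 0.
Proof. by move=> V0; elim: w a => [|w IH] //= [a1 a2]; rewrite (IH a1) (IH a2). Qed.

Lemma kdeg_ge0 w (a : koszul V w) : kdeg_ge 0 a.
Proof. by elim: w a => [|w IH] //= [a1 a2]; split; apply: IH. Qed.

Lemma kdeg_ge_zero w s : kdeg_ge s (0 : koszul V w).
Proof. by elim: w s => [|w IH] [|s] //=; split; apply: IH. Qed.

Lemma kdeg_geD w s (a b : koszul V w) :
  kdeg_ge s a -> kdeg_ge s b -> kdeg_ge s (a + b).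
Proof.
elim: w s a b => [|w IH] [|s] //=; first by move=> a b -> ->; rewrite addr0.
  by case=> [a1 a2] [b1 b2] [? ?] [? ?]; split; apply: IH.
by case=> [a1 a2] [b1 b2] [? ?] [? ?]; split; apply: IH.
Qed.

Lemma kdeg_geZ w s r (a : koszul V w) : kdeg_ge s a -> kdeg_ge s (r *: a).
Proof.
elim: w s a => [|w IH] [|s] //=; first by move=> a ->; rewrite scaler0.
  by case=> [a1 a2] [? ?]; split; apply: IH.
by case=> [a1 a2] [? ?]; split; apply: IH.
Qed.

Lemma kdeg_geB w s (a b : koszul V w) :
  kdeg_ge s a -> kdeg_ge s b -> kdeg_ge s (a - b).
Proof. by move=> ha hb; rewrite -scaleN1r; apply: kdeg_geD => //; apply: kdeg_geZ. Qed.

Lemma kdeg_ge_kdiff w s (a : koszul V w) : kdeg_ge s a -> kdeg_ge s.-1 (kdiff a).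
Proof.
elim: w s a => [|w IH] s /=; first by move=> *; apply: (kdeg_ge_zero 0).
case=> [a1 a2] /= [h1 h2]; split.
  by apply: kdeg_geD; [apply: IH | apply: kdeg_geZ].
by rewrite -scaleN1r; apply/kdeg_geZ/IH.
Qed.

Lemma kdeg_ge1 w (a : koszul V w) : kdeg_ge 1 a <-> kdeg0 a = 0.
Proof.
elim: w a => [|w IH] //= [a1 a2] /=; rewrite -IH.
by split=> [[]|h] //; split=> //; apply: kdeg_ge0.
Qed.

Lemma kdeg_geS w s (a : koszul V w) : kdeg_ge s.+1 a -> kdeg_ge s a.
Proof.
elim: w s a => [|w IH] [|s] //= [a1 a2] [h1 h2]; split; try apply: kdeg_ge0.
  by apply: IH.
by apply: IH.
Qed.

Lemma kdeg_ge_le w s t (a : koszul V w) : (s <= t)%N -> kdeg_ge t a -> kdeg_ge s a.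
Proof.
move/subnK=> <-; elim: (t - s)%N => [|i IH] // h.
by apply/IH/kdeg_geS.
Qed.

End Chains.

Section Predicates.
Variable V : lmodType R.

Lemma sub_kall (P Q : V -> Prop) w (a : koszul V w) :
  (forall v, P v -> Q v) -> kall P a -> kall Q a.
Proof.
by move=> PQ; elim: w a => [|w IH] /=; [apply: PQ | case=> ? ? [? ?]; split; apply: IH].
Qed.

Lemma kallZ (P Q : V -> Prop) w r (a : koszul V w) :
  (forall v, P v -> Q (r *: v)) -> kall P a -> kall Q (r *: a).
Proof.
move=> PQ; elim: w a => [|w IH] /=; first exact: PQ.
by case=> [a1 a2] [? ?]; split; apply: IH.
Qed.

Variable P : V -> Prop.

Lemma kallD w (a b : koszul V w) : (forall u v, P u -> P v -> P (u + v)) ->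
  kall P a -> kall P b -> kall P (a + b).
Proof.
move=> PD; elim: w a b => [|w IH] /=; first exact: PD.
by case=> [a1 a2] [b1 b2] [? ?] [? ?]; split; apply: IH.
Qed.

Lemma kall_scale w r (a : koszul V w) : (forall v, P (r *: v)) -> kall P (r *: a).
Proof. by move=> PZ; elim: w a => [|w IH] //= [a1 a2]; split; apply: IH. Qed.

Lemma kall_kdeg0 w (c : koszul V w) : kall P c -> P (kdeg0 c).
Proof. by elim: w c => [|w IH] //= [c1 c2] [/IH]. Qed.

Lemma kall0 w : P 0 -> kall P (0 : koszul V w).
Proof. by move=> P0; elim: w => [|w IH] //=. Qed.

Lemma kallT w (a : koszul V w) : (forall v, P v) -> kall P a.
Proof. by move=> PT; elim: w a => [|w IH] //= [a1 a2]; split; apply: IH. Qed.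

Lemma kall_kdiff w (a : koszul V w) : P 0 -> (forall u v, P u -> P v -> P (u + v)) ->
  (forall r v, P v -> P (r *: v)) -> kall P a -> kall P (kdiff a).
Proof.
move=> P0 PD PZ; elim: w a => [|w IH] //= [a1 a2] [? ?]; split.
  by apply: kallD => //; [apply: IH | apply: kallZ (PZ _) _].
by rewrite -scaleN1r; apply: kallZ (PZ _) (IH _ _).
Qed.

End Predicates.

Lemma kall_kmap (V U : lmodType R) (P : U -> Prop) (f : V -> U) w (a : koszul V w) :
  kall P (kmap f a) <-> kall (P \o f) a.
Proof. by elim: w a => [|w IH] //= [a1 a2]; rewrite !IH. Qed.

Lemma kmap_comp (V U X : lmodType R) (f : U -> X) (g : V -> U) w (a : koszul V w) :
  kmap f (kmap g a) = kmap (f \o g) a.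
Proof. by elim: w a => [|w IH] //= [a1 a2]; rewrite !IH. Qed.

Lemma eq_kmap (V U : lmodType R) (f g : V -> U) w (a : koszul V w) :
  f =1 g -> kmap f a = kmap g a.
Proof. by move=> fg; elim: w a => [|w IH] //= [a1 a2]; rewrite !IH. Qed.

Lemma kmap_id (V : lmodType R) w (a : koszul V w) : kmap id a = a.
Proof. by elim: w a => [|w IH] //= [a1 a2]; rewrite !IH. Qed.

Lemma kmap_zero (V U : lmodType R) (f : V -> U) w (a : koszul V w) :
  f =1 (fun=> 0) -> kmap f a = 0.
Proof. by move=> f0; elim: w a => [|w IH] //= [a1 a2]; rewrite !IH. Qed.

Lemma kdeg0_kmap (V U : lmodType R) (f : V -> U) w (a : koszul V w) :
  kdeg0 (kmap f a) = f (kdeg0 a).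
Proof. by elim: w a => [|w IH] //= [a1 a2]; rewrite !IH. Qed.

Lemma kdeg_ge_kmap (V U : lmodType R) (f : V -> U) w s (a : koszul V w) :
  f 0 = 0 -> kdeg_ge s a -> kdeg_ge s (kmap f a).
Proof.
move=> f0; elim: w s a => [|w IH] [|s] //=; first by move=> a ->.
  by case=> [a1 a2] [? ?]; split; apply: IH.
by case=> [a1 a2] [? ?]; split; apply: IH.
Qed.

Section LinearMap.
Variables (V U : lmodType R) (f : {linear V -> U}).

Lemma kmapD w (a b : koszul V w) : kmap f (a + b) = kmap f a + kmap f b.
Proof.
elim: w a b => [|w IH] /=; first exact: linearD.
by case=> [a1 a2] [b1 b2] /=; rewrite !IH.
Qed.

Lemma kmapZ w r (a : koszul V w) : kmap f (r *: a) = r *: kmap f a.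
Proof.
elim: w a => [|w IH] /=; first exact: linearZ.
by case=> [a1 a2] /=; rewrite !IH.
Qed.

Lemma kmap0 w : kmap f (0 : koszul V w) = 0.
Proof. by have := kmapZ 0 (0 : koszul V w); rewrite !scale0r. Qed.

Lemma kmapB w (a b : koszul V w) : kmap f (a - b) = kmap f a - kmap f b.
Proof. by rewrite kmapD -!scaleN1r kmapZ. Qed.

Lemma kmap_kdiff w (a : koszul V w) : kmap f (kdiff a) = kdiff (kmap f a).
Proof.
elim: w a => [|w IH] /=; first by rewrite linear0.
by case=> [a1 a2] /=; rewrite kmapD kmapZ -!scaleN1r kmapZ !IH.
Qed.

Lemma kall_kmap_eq0 w (a : koszul V w) : kmap f a = 0 -> kall (fun v => f v = 0) a.
Proof.
by move=> fa0; apply/(kall_kmap (fun u => u = 0)); rewrite fa0; apply: kall0.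
Qed.

End LinearMap.

Section Lift.
Variables V U : lmodType R.

Lemma klift (Rel : V -> U -> Prop) w (c : koszul U w) : Rel 0 0 ->
  kall (fun v => exists u, Rel u v) c ->
  exists c' : koszul V w, kall2 (fun u v => Rel u v /\ (v = 0 -> u = 0)) c' c.
Proof.
move=> Rel00; elim: w c => [|w IH] /=.
  move=> v [u Ruv]; have [->|nz] := eqVneq v 0; first by exists 0.
  by exists u; split=> // /eqP; rewrite (negbTE nz).
by case=> [c1 c2] /= [/IH [d1 h1] /IH [d2 h2]]; exists (d1, d2).
Qed.

Lemma sub_kall2 (P Q : V -> U -> Prop) w (a : koszul V w) b :
  (forall u v, P u v -> Q u v) -> kall2 P a b -> kall2 Q a b.
Proof.
move=> PQ; elim: w a b => [|w IH] /=; first exact: PQ.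
by case=> ? ? [? ?] [? ?]; split; apply: IH.
Qed.

Lemma kdeg_ge_kall2 w s (a : koszul V w) (b : koszul U w) :
  kall2 (fun u v => v = 0 -> u = 0) a b -> kdeg_ge s b -> kdeg_ge s a.
Proof.
elim: w s a b => [|w IH] s /=; first by case: s => // a b h /h.
by case=> [a1 a2] [b1 b2] [? ?] [? ?]; split; apply: IH; eauto.
Qed.

Lemma kall2_kmap (f : V -> U) w (a : koszul V w) b :
  kall2 (fun u v => f u = v) a b -> kmap f a = b.
Proof. by elim: w a b => [|w IH] //= [a1 a2] [b1 b2] /= [/IH -> /IH ->]. Qed.

Lemma kall2_kall_sub (P : U -> Prop) (f : V -> U) w (a : koszul V w) b :
  kall2 (fun u v => P (f u - v)) a b -> kall P (kmap f a - b).
Proof. by elim: w a b => [|w IH] //= [a1 a2] [b1 b2] /= [/IH ? /IH ?]. Qed.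

End Lift.
End KoszulComplex.

Section RegularSequence.
Variable R : comNzRingType.
Variable y : nat -> R.

Definition seq_ideal (w : nat) (r : R^o) : Prop :=
  exists f : nat -> R, r = \sum_(i < w) f i * y i.

Definition regular_seq (N : nat) :=
  forall w b, (w < N)%N -> seq_ideal w (y w * b) -> seq_ideal w b.

Lemma seq_ideal0 w : seq_ideal w 0.
Proof. by exists (fun=> 0); rewrite big1 // => i _; rewrite mul0r. Qed.

Lemma seq_idealD w a b : seq_ideal w a -> seq_ideal w b -> seq_ideal w (a + b).
Proof.
move=> [f ->] [g ->]; exists (fun i => f i + g i).
by rewrite -big_split; apply: eq_bigr => i _; rewrite mulrDl.
Qed.

Lemma seq_idealM w r a : seq_ideal w a -> seq_ideal w (r * a).
Proof.
move=> [f ->]; exists (fun i => r * f i).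
by rewrite mulr_sumr; apply: eq_bigr => i _; rewrite mulrA.
Qed.

Lemma seq_idealS w a : seq_ideal w a -> seq_ideal w.+1 a.
Proof.
move=> [f ->]; exists (fun i => if (i < w)%N then f i else 0).
rewrite big_ord_recr /= ltnn mul0r addr0.
by apply: eq_bigr => i _; rewrite ltn_ord.
Qed.

Lemma seq_ideal_gen w i : (i < w)%N -> seq_ideal w (y i).
Proof.
move=> iw; exists (fun j => (j == i)%:R).
rewrite (bigD1 (Ordinal iw)) //= eqxx mul1r big1 ?addr0 // => j ji.
suff /negbTE -> : nat_of_ord j != i by rewrite mul0r.
by apply: contra ji => /eqP ji; apply/eqP/val_inj.
Qed.

Lemma kall_seq_ideal_kdiff w (c : koszul R^o w) : kall (seq_ideal w) (kdiff y c).
Proof.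
elim: w c => [|w IH] /=; first by move=> _; apply: seq_ideal0.
case=> [a b] /=; split.
  apply: kallD; first exact: seq_idealD.
    by apply: sub_kall (IH a) => x; apply: seq_idealS.
  by apply: kall_scale => x; rewrite [_ *: _]mulrC; apply/seq_idealM/seq_ideal_gen.
rewrite -scaleN1r; apply: kallZ; first by move=> x; apply: seq_idealM.
by apply: sub_kall (IH b) => x; apply: seq_idealS.
Qed.

Lemma seq_ideal_kdeg0_kdiff w r :
  seq_ideal w r -> exists c : koszul R^o w, kdeg0 (kdiff y c) = r.
Proof.
elim: w r => [|w IH] r [f ->]; first by exists 0; rewrite big_ord0.
have [c dc] := IH _ (ex_intro _ f erefl).
exists (c, kscalar w (f w : R^o)).
by rewrite big_ord_recr /= kdeg0D kdeg0Z kdeg0_kscalar dc mulrC.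
Qed.

Variable N : nat.
Hypothesis y_regular : regular_seq N.

Lemma koszul_exact_ring w : (w <= N)%N -> forall c : koszul R^o w,
  kdiff y c = 0 -> kdeg0 c = 0 -> exists u, kdiff y u = c.
Proof.
elim: w => [|w IH] wN /=; first by move=> c _ ->; exists 0.
have {}IH := IH (ltnW wN).
case=> [a b] /= [da_yb db] b0.
have yb : y w * kdeg0 b = - kdeg0 (kdiff y a).
  apply/eqP; rewrite -addr_eq0 addrC.
  by move/(congr1 (@kdeg0 _ _ _)): da_yb; rewrite kdeg0D kdeg0Z kdeg00 => /eqP.
have bJ : seq_ideal w (kdeg0 b).
  apply: y_regular => //; rewrite yb -mulN1r; apply: seq_idealM.
  exact: (kall_kdeg0 (kall_seq_ideal_kdiff _)).
have [c1 c1b] := seq_ideal_kdeg0_kdiff bJ.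
have [c2 c2b] : exists c2, kdiff y c2 = b - kdiff y c1.
  apply: IH; first by rewrite kdiffB kdiff_kdiff subr0; apply/eqP; rewrite -oppr_eq0 db.
  by rewrite kdeg0D kdeg0N c1b subrr.
pose c := kpos (c1 + c2).
have dc : kdiff y c = b by rewrite kdiff_kpos kdiffD c2b addrC subrK.
have [u0 du0] : exists u0, kdiff y u0 = a + y w *: c.
  apply: IH; first by rewrite kdiffD kdiffZ dc.
  by rewrite kdeg0D kdeg0Z b0 kdeg0_kpos scaler0 addr0.
exists ((u0, - c) : koszul R^o w.+1) => /=.
by rewrite du0 kdiffN dc opprK scalerN addrK.
Qed.

End RegularSequence.

Module KoszulFree.
Import finmap monalg.

Section Free.
Variables (R : comNzRingType) (y : nat -> R) (N : nat).
Hypothesis y_regular : regular_seq y N.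

Section Basis.
Variable K : choiceType.
Local Notation F := {malg R[K]}.

Definition coef_at (k : K) (g : F) : R^o := mcoeff k g.

Lemma coef_at_linear k : linear (coef_at k).
Proof. by move=> r g h; rewrite /coef_at mcoeffD mcoeffZ. Qed.

HB.instance Definition _ k :=
  GRing.isLinear.Build R F R^o *:%R (coef_at k) (coef_at_linear k).

Definition basis_at (k : K) (r : R^o) : F := << r *g k >>.

Lemma basis_at_linear k : linear (basis_at k).
Proof.
move=> r a b; rewrite /basis_at monalgUD; congr (_ + _).
by apply/malgP => k'; rewrite mcoeffZ !mcoeffU mulrnAr.
Qed.

HB.instance Definition _ k :=
  GRing.isLinear.Build R R^o F *:%R (basis_at k) (basis_at_linear k).

Lemma koszul_support_bound w (c : koszul F w) :
  exists S : {fset K}, kall (fun g => msupp g `<=` S)%fset c.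
Proof.
elim: w c => [|w IH] /=; first by move=> g; exists (msupp g).
case=> [a b]; have [[Sa aS] [Sb bS]] := (IH a, IH b).
exists (Sa `|` Sb)%fset; split.
  by apply: sub_kall aS => g /fsubset_trans; apply; apply: fsubsetUl.
by apply: sub_kall bS => g /fsubset_trans; apply; apply: fsubsetUr.
Qed.

Lemma koszul_basis_expansion (S : {fset K}) w (c : koszul F w) :
  kall (fun g => msupp g `<=` S)%fset c ->
  c = \sum_(k <- S) kmap (basis_at k) (kmap (coef_at k) c).
Proof.
elim: w c => [|w IH] /=; first by move=> g; apply: monalgEw.
by case=> [a b] /= [aS bS]; rewrite koszul_sum_pair -!IH.
Qed.

Lemma koszul_exact_free w : (w <= N)%N -> forall c : koszul F w,
  kdiff y c = 0 -> kdeg0 c = 0 -> exists u, kdiff y u = c.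
Proof.
move=> wN c dc c0; have [S cS] := koszul_support_bound c.
rewrite (koszul_basis_expansion cS).
elim: (enum_fset S) => [|k s [u du]]; first by exists 0; rewrite big_nil kdiff0.
have [uk duk] : exists uk, kdiff y uk = kmap (coef_at k) c.
  apply: (koszul_exact_ring y_regular wN); first by rewrite -kmap_kdiff dc kmap0.
  by rewrite kdeg0_kmap c0 linear0.
exists (kmap (basis_at k) uk + u).
by rewrite big_cons kdiffD du -kmap_kdiff duk.
Qed.

End Basis.

Section Projective.
Variable P : lmodType R.
Local Notation F := {malg R[P]}.

Definition malg_comb (g : F) : P := \sum_(k <- msupp g) mcoeff k g *: (k : P).

Lemma malg_combEw (D : {fset P}) (g : F) : (msupp g `<=` D)%fset ->
  malg_comb g = \sum_(k <- D) mcoeff k g *: (k : P).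
Proof.
move=> gD; rewrite /malg_comb (big_fset_incl _ gD) // => k _ kg.
by rewrite mcoeff_outdom // scale0r.
Qed.

Lemma malg_comb_linear : linear malg_comb.
Proof.
move=> r g1 g2; pose D := (msupp g1 `|` msupp g2)%fset.
have g1D : (msupp g1 `<=` D)%fset by apply: fsubsetUl.
have g2D : (msupp g2 `<=` D)%fset by apply: fsubsetUr.
have gD : (msupp (r *: g1 + g2) `<=` D)%fset.
  apply: (fsubset_trans (msuppD_le _ _)).
  by apply: fsetUSS => //; apply: (fsubset_trans (msuppZ_le _ _)).
rewrite (malg_combEw g1D) (malg_combEw g2D) (malg_combEw gD) scaler_sumr.
by rewrite -big_split; apply: eq_bigr => k _; rewrite mcoeffD mcoeffZ scalerDl scalerA.
Qed.

HB.instance Definition _ :=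
  GRing.isLinear.Build R F P *:%R malg_comb malg_comb_linear.

Lemma malg_comb_basis (p : P) : malg_comb << 1 *g p >> = p.
Proof.
rewrite (@malg_combEw [fset p]%fset) ?msuppU_le //.
by rewrite big_seq_fset1 mcoeffUU scale1r.
Qed.

(* A projective module is a retract of a free one, and retracts of exact
   complexes are exact. *)
Lemma koszul_exact_projective w : projective_mod P -> (w <= N)%N ->
  forall c : koszul P w, kdiff y c = 0 -> kdeg0 c = 0 -> exists u, kdiff y u = c.
Proof.
move=> projP wN c dc c0.
have [h hK] : exists h : {linear P -> F}, forall p, malg_comb (h p) = idfun p.
  by apply: projP => p; exists << 1 *g p >>; apply: malg_comb_basis.
have [u du] : exists u, kdiff y u = kmap h c.
  apply: (koszul_exact_free wN); first by rewrite -kmap_kdiff dc kmap0.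
  by rewrite kdeg0_kmap c0 linear0.
exists (kmap malg_comb u).
by rewrite -kmap_kdiff du kmap_comp (eq_kmap _ hK) kmap_id.
Qed.

End Projective.
End Free.
End KoszulFree.
Import KoszulFree.

Section TorVanishing.
Variables (R : comNzRingType) (y : nat -> R) (N : nat).
Hypothesis y_regular : regular_seq y N.
Variable I : R -> Prop.
Hypothesis I0 : I 0.
Hypothesis ID : forall a b, I a -> I b -> I (a + b).
Hypothesis IM : forall r a, I a -> I (r * a).
Local Notation IR := (I : R^o -> Prop).

Section Resolution.
Variables (m : nat) (P : nat -> lmodType R) (d : forall i, {linear P i.+1 -> P i}).
Hypothesis P_projective : forall i, projective_mod (P i).
Hypothesis P_vanish : forall i, (m < i)%N -> forall x : P i, x = 0.
Hypothesis d_exact : forall i (x : P i.+1), d i x = 0 <-> exists z, d i.+1 z = x.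
Variables (w : nat) (wN : (w <= N)%N).

(* The staircase argument in the double complex with exact rows
   K(y) (x) P_i (in positive Koszul degree) and columns P vanishing past m. *)
Lemma koszul_staircase s : (1 <= s)%N -> forall i, (m < i + s)%N ->
  forall c : koszul (P i) w, kdeg_ge s c ->
  forall c' : koszul (P i.+1) w, kdeg_ge s.-1 c' -> kdiff y c = kmap (d i) c' ->
  exists u v, kdeg_ge 1 u /\ c = kdiff y u + kmap (d i) v.
Proof.
elim: s => [//|s IH] _ i ms c cs c' c's dc.
have exact_row (b : koszul (P i) w) : kdiff y b = 0 -> kdeg0 b = 0 ->
    exists u, kdeg_ge 1 u /\ b = kdiff y u.
  move=> db b0; have [u du] := koszul_exact_projective y_regular (@P_projective i) wN db b0.
  by exists (kpos u); rewrite kdeg_ge1 kdeg0_kpos kdiff_kpos du.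
case: s IH cs c's ms => [|s] IH cs c's ms.
  have c'0 : c' = 0 by apply: koszul_trivial => x; apply: P_vanish; rewrite addn1 in ms.
  have dc0 : kdiff y c = 0 by rewrite dc c'0 kmap0.
  have [u [u1 cu]] := exact_row c dc0 (proj1 (kdeg_ge1 c) cs).
  by exists u, 0; rewrite kmap0 addr0.
have dc'_im : kall (fun x => exists z, d i.+1 z = x) (kdiff y c').
  apply: sub_kall (kall_kmap_eq0 _) => [x /d_exact //|].
  by rewrite kmap_kdiff -dc kdiff_kdiff.
have [c'' c''_lift] := klift (raddf0 (d i.+1)) dc'_im.
have c''s : kdeg_ge s c''.
  apply: (kdeg_ge_kall2 (sub_kall2 _ c''_lift)) => [u v [] //|].
  exact: (kdeg_ge_kdiff y c's).
have dc' : kdiff y c' = kmap (d i.+1) c''.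
  by symmetry; apply: kall2_kmap; apply: sub_kall2 c''_lift => u v [].
have [|u' [v' [u'1 c'E]]] := IH erefl i.+1 _ c' c's c'' c''s dc'; first by rewrite addSnnS.
have [||u [u1 cE]] := exact_row (c - kmap (d i) u').
- rewrite kdiffB dc -kmap_kdiff -kmapB {1}c'E addrC addKr kmap_comp.
  by apply: kmap_zero => x /=; apply/d_exact; exists x.
- apply/kdeg_ge1; apply: kdeg_geB; first exact: (kdeg_ge_le _ cs).
  by apply: kdeg_ge_kmap => //; apply: linear0.
by exists u, u'; rewrite -cE subrK.
Qed.

Variable eps : {linear P 0 -> R^o}.
Hypothesis eps_onto : forall r, exists x, I (eps x - r).
Hypothesis eps_exact : forall x, I (eps x) <-> exists z, d 0 z = x.

Lemma koszul_cycle_mod_boundary j : (m < j)%N ->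
  forall z : koszul R^o w, kdeg_ge j z -> kall IR (kdiff y z) ->
  exists u, kall IR (kdiff y u - z).
Proof.
move=> mj z zj dzI.
have [z0 z0_lift] : exists z0 : koszul (P 0) w,
    kall2 (fun x (r : R^o) => I (eps x - r) /\ (r = 0 -> x = 0)) z0 z.
  by apply: klift; [rewrite raddf0 subr0 | apply: kallT => r; apply: eps_onto].
have z0j : kdeg_ge j z0 by apply: (kdeg_ge_kall2 (sub_kall2 _ z0_lift)) => // u v [].
have z0z : kall IR (kmap eps z0 - z).
  by apply: kall2_kall_sub; apply: sub_kall2 z0_lift => u v [].
have dz0I : kall IR (kdiff y (kmap eps z0)).
  rewrite -(subrK z (kmap eps z0)) kdiffD; apply: kallD dzI => //.
  by apply: kall_kdiff z0z => // r x; apply: IM.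
have dz0_im : kall (fun x => exists z, d 0 z = x) (kdiff y z0).
  apply: (sub_kall (P := fun x => I (eps x))) => [x /eps_exact //|].
  by rewrite -(kall_kmap IR) kmap_kdiff.
have [c' c'_lift] := klift (raddf0 (d 0)) dz0_im.
have c'j : kdeg_ge j.-1 c'.
  apply: (kdeg_ge_kall2 (sub_kall2 _ c'_lift)) => [u v [] //|].
  exact: kdeg_ge_kdiff.
have dz0 : kdiff y z0 = kmap (d 0) c'.
  by symmetry; apply: kall2_kmap; apply: sub_kall2 c'_lift => u v [].
have [u [v [_ z0E]]] := koszul_staircase (i := 0) (leq_ltn_trans (leq0n m) mj) mj z0j c'j dz0.
exists (kmap eps u).
have -> : kdiff y (kmap eps u) - z = (kmap eps z0 - z) - kmap eps (kmap (d 0) v).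
  by rewrite z0E kmapD kmap_kdiff addrAC addrK.
apply: kallD z0z _ => //; rewrite -scaleN1r; apply: kallZ => [x|]; first exact: IM.
by rewrite kmap_comp; apply/kall_kmap/kallT => x /=; apply/eps_exact; exists x.
Qed.

End Resolution.

Lemma koszul_tor_vanishing m w j : has_proj_res_of_length I m -> (w <= N)%N ->
  (m < j)%N -> forall z : koszul R^o w, kdeg_ge j z -> kall IR (kdiff y z) ->
  exists u, kall IR (kdiff y u - z).
Proof.
move=> [P [d [eps [P_projective P_vanish eps_onto eps_exact d_exact]]]] wN.
exact: koszul_cycle_mod_boundary.
Qed.

End TorVanishing.

Section TopCycle.
Variables (R : comNzRingType) (y : nat -> R).

Fixpoint ktop (V : lmodType R) w : koszul V w -> V :=
  if w is w'.+1 then fun c => ktop c.2 else id.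

(* [kcontract q c] is the coefficient of e_p /\ ... /\ e_(p+q-1) in c. *)
Fixpoint kcontract (V : lmodType R) p q : koszul V (q + p) -> koszul V p :=
  if q is q'.+1 then fun c => kcontract c.2 else id.

Fixpoint kwedge (V : lmodType R) p q (c : koszul V p) : koszul V (q + p) :=
  if q is q'.+1 then (0, kwedge q' c) else c.

Fixpoint kvol p : koszul R^o p :=
  if p is p'.+1 then (0, kvol p') else 1.

Section Coefficients.
Variable V : lmodType R.

Lemma ktopD w (a b : koszul V w) : ktop (a + b) = ktop a + ktop b.
Proof. by elim: w a b => [|w IH] //= [a1 a2] [b1 b2]; apply: IH. Qed.

Lemma ktopZ w r (a : koszul V w) : ktop (r *: a) = r *: ktop a.
Proof. by elim: w a => [|w IH] //= [a1 a2]; apply: IH. Qed.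

Lemma ktopN w (a : koszul V w) : ktop (- a) = - ktop a.
Proof. by rewrite -scaleN1r ktopZ scaleN1r. Qed.

Lemma ktop0 w : ktop (0 : koszul V w) = 0.
Proof. by have := ktopZ 0 (0 : koszul V w); rewrite !scale0r. Qed.

Lemma ktop_kdiff w (a : koszul V w) : ktop (kdiff y a) = 0.
Proof. by elim: w a => [|w IH] //= [a1 a2]; rewrite ktopN IH oppr0. Qed.

Lemma kall_ktop (P : V -> Prop) w (a : koszul V w) : kall P a -> P (ktop a).
Proof. by elim: w a => [|w IH] //= [a1 a2] [_ /IH]. Qed.

Lemma kcontractN p q (a : koszul V (q + p)) : kcontract (- a) = - kcontract a.
Proof. by elim: q a => [|q IH] //= [a1 a2]; apply: IH. Qed.

Lemma kcontractB p q (a b : koszul V (q + p)) :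
  kcontract (a - b) = kcontract a - kcontract b.
Proof. by elim: q a b => [|q IH] //= [a1 a2] [b1 b2]; apply: IH. Qed.

Lemma kcontract_kdiff p q (a : koszul V (q + p)) :
  kcontract (kdiff y a) = (-1) ^+ q *: kdiff y (kcontract a).
Proof.
elim: q a => [|q IH] /=; first by move=> a; rewrite scale1r.
by case=> [a1 a2] /=; rewrite kcontractN IH exprS -scaleN1r scalerA.
Qed.
Lemma kall_kcontract (P : V -> Prop) p q (a : koszul V (q + p)) :
  kall P a -> kall P (kcontract a).
Proof. by elim: q a => [|q IH] //= [a1 a2] [_ /IH]. Qed.

Lemma ktop_kcontract p q (a : koszul V (q + p)) : ktop (kcontract a) = ktop a.
Proof. by elim: q a => [|q IH] //= [a1 a2]; apply: IH. Qed.

Lemma kcontract_kwedge p q (c : koszul V p) : kcontract (kwedge q c) = c.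
Proof. by elim: q => [|q IH] //=. Qed.

Lemma kdeg_ge_kwedge p q s (c : koszul V p) : kdeg_ge s c -> kdeg_ge (q + s) (kwedge q c).
Proof. by move=> cs; elim: q => [|q IH] //=; split=> //; apply: kdeg_ge_zero. Qed.

Lemma kall_kwedge (P : V -> Prop) p q (c : koszul V p) :
  P 0 -> kall P c -> kall P (kwedge q c).
Proof. by move=> P0 cP; elim: q => [|q IH] //=; split=> //; apply: kall0. Qed.

End Coefficients.

Lemma ktop_kvol p : ktop (kvol p) = 1.
Proof. by elim: p. Qed.

Lemma kdeg_ge_kvol p : kdeg_ge p (kvol p).
Proof. by elim: p => [|p IH] //=; split=> //; apply: kdeg_ge_zero. Qed.

Variable I : R -> Prop.
Local Notation IR := (I : R^o -> Prop).

Section Cycle.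
Hypothesis I0 : I 0.
Hypothesis IM : forall r a, I a -> I (r * a).
Variable p : nat.
Hypothesis yI : forall j r, (p <= j)%N -> seq_ideal y p r -> I (y j * r).

Lemma kwedge_kvol_cycle q : kall IR (kdiff y (kwedge q (kdiff y (kvol p)))).
Proof.
elim: q => [|q IH] /=; first by rewrite kdiff_kdiff; apply: kall0.
split.
  rewrite kdiff0 add0r; apply: kallZ (kall_kwedge _ _ (kall_seq_ideal_kdiff y _)).
    by move=> x xJ; apply: yI => //; apply: leq_addl.
  exact: seq_ideal0.
by rewrite -scaleN1r; apply: kallZ IH => x; apply: IM.
Qed.

End Cycle.

Lemma kwedge_kvol_boundary_ktop p q (u : koszul R^o (q.+1 + p.+1)) :
  kall IR (kdiff y u - kwedge q.+1 (kdiff y (kvol p.+1))) ->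
  I (y (q + p.+1) * ktop u) /\ I ((-1) ^+ q.+1 * (y p * ktop u) - y p).
Proof.
move=> uI; split.
  case: u uI => [u1 u2] /= [/kall_ktop + _].
  by rewrite !ktopD !ktopN ktopZ ktop_kdiff ktop0 add0r subr0.
have := kall_kcontract (q := q.+1) uI.
rewrite kcontractB kcontract_kdiff kcontract_kwedge -(ktop_kcontract (q := q.+1) u).
case: (kcontract u) => [v1 v2] /= [/kall_ktop + _].
by rewrite kdiff0 !(ktopD, ktopN, ktopZ, ktop_kdiff, ktop0, ktop_kvol) !add0r [_ *: 1]mulr1.
Qed.

End TopCycle.

Section EdgeIdeal.
Variables (k : fieldType) (n : nat).
Local Notation R := {mpoly k[n]}.

Lemma mcoeff_mulX_eq0 (p : R) (j : 'I_n) (m : 'X_{1..n}) :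
  m j = 0%N -> (p * 'X_j)@_m = 0.
Proof.
move=> mj0; apply/eqP; rewrite mcoeff_eq0 (perm_mem (msuppMX p U_(j))).
by apply/mapP => -[m' _ mE]; move/eqP: mj0; rewrite mE mnmDE mnm1E eqxx addn_eq0.
Qed.

Lemma mcoeff_X_mul (p : R) (j : 'I_n) m : ('X_j * p)@_(U_(j) + m) = p@_m.
Proof. by rewrite mulrC mcoeffMX. Qed.

Lemma mcoeff_mulXU (p : R) (j : 'I_n) : (p * 'X_j)@_U_(j) = p@_0.
Proof. by have := mcoeffMX p U_(j) 0%MM; rewrite addm0. Qed.

Lemma mcoeff_sign_mul (p : R) q m : ((-1) ^+ q * p)@_m = (-1) ^+ q * p@_m.
Proof.
elim: q => [|q IH]; first by rewrite !expr0 !mul1r.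
by rewrite !exprS -!mulrA !mulN1r mcoeffN IH.
Qed.

Section DistinctVariables.
Variable s : nat -> 'I_n.
Local Notation y := (fun i => 'X_(s i) : R).

Lemma seq_idealX w (r : R) :
  seq_ideal y w r <-> forall m, r@_m != 0 -> [exists i : 'I_w, 0 < m (s i)]%N.
Proof.
split=> [[f ->] m|rP].
  apply: contraR; rewrite negb_exists => /forallP m_si.
  rewrite raddf_sum big1 // => i _; apply: mcoeff_mulX_eq0.
  by apply/eqP; rewrite -leqn0 leqNgt m_si.
rewrite (mpolyE r) big_seq; apply: big_ind; [exact: seq_ideal0 | exact: seq_idealD|].
move=> m; rewrite mcoeff_msupp => /rP /existsP [i mi].
have mE : m = (U_(s i) + (m - U_(s i)))%MM.
  apply/mnmP => t; rewrite mnmDE mnmBE mnm1E.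
  by case: eqP => [<-|]; [rewrite add1n subn1 prednK | rewrite add0n subn0].
have -> : 'X_[m] = 'X_(s i) * 'X_[m - U_(s i)] :> R by rewrite -mpolyXD -mE.
by rewrite scalerAr mulrC; apply/seq_idealM/seq_ideal_gen.
Qed.

Lemma regular_seq_variables N :
  (forall i j, (i < N)%N -> (j < N)%N -> s i = s j -> i = j) ->
  regular_seq y N.
Proof.
rewrite /regular_seq => s_inj w b wN /seq_idealX ybJ; apply/seq_idealX => m bm.
have ybm : ('X_(s w) * b)@_(U_(s w) + m) != 0 by rewrite mcoeff_X_mul.
have /existsP [i] := ybJ _ ybm; rewrite mnmDE mnm1E => swi.
apply/existsP; exists i; suff /negbTE sw_si : s w != s i by rewrite sw_si in swi.
apply/eqP => /(s_inj _ _ wN (ltn_trans (ltn_ord i) wN)) wi.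
by move: (ltn_ord i); rewrite -wi ltnn.
Qed.

End DistinctVariables.

Variable e : rel 'I_n.
Local Notation I := (@edge_ideal k n e).

Lemma edge_ideal0 : I 0.
Proof. by exists (fun _ _ => 0); rewrite big1 // => i _; rewrite big1 // => j _; rewrite mul0r. Qed.

Lemma edge_idealD a b : I a -> I b -> I (a + b).
Proof.
move=> [f ->] [g ->]; exists (fun i j => f i j + g i j).
rewrite -big_split; apply: eq_bigr => i _; rewrite -big_split.
by apply: eq_bigr => j _; rewrite mulrDl.
Qed.

Lemma edge_idealM r a : I a -> I (r * a).
Proof.
move=> [f ->]; exists (fun i j => r * f i j).
rewrite mulr_sumr; apply: eq_bigr => i _; rewrite mulr_sumr.
by apply: eq_bigr => j _; rewrite mulrA.
Qed.

Lemma edge_ideal_edge a b : e a b -> I ('X_a * 'X_b).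
Proof.
move=> eab; exists (fun i j => ((i == a) && (j == b))%:R).
rewrite (bigD1 a) //= (bigD1 b) //= !eqxx mul1r big1 ?addr0.
  rewrite big1 ?addr0 // => i ia; rewrite big1 // => j _.
  by rewrite (negbTE ia) mul0r.
by move=> j /andP [_ jb]; rewrite (negbTE jb) mul0r.
Qed.

Lemma edge_ideal_mul_seq_ideal (s : nat -> 'I_n) w j (r : R) :
  (forall i, (i < w)%N -> e (s i) (s j)) ->
  seq_ideal (fun i => 'X_(s i)) w r -> I ('X_(s j) * r).
Proof.
move=> e_sj [f ->]; rewrite mulr_sumr.
apply: big_ind; [exact: edge_ideal0 | exact: edge_idealD |] => i _.
by rewrite mulrCA [X in _ * X]mulrC; apply/edge_idealM/edge_ideal_edge/e_sj.
Qed.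

(* Edge ideals are generated in degree 2. *)
Lemma edge_ideal_mcoeffU p a : I p -> p@_U_(a) = 0.
Proof.
move=> [f ->]; rewrite raddf_sum big1 // => i _; rewrite raddf_sum big1 // => j _.
change ((f i j * ('X_i * 'X_j))@_U_(a) = 0); rewrite mulrA; have [->|ja] := eqVneq j a.
  by rewrite mcoeff_mulXU mcoeff_mulX_eq0 // mnm0E.
by rewrite mcoeff_mulX_eq0 // mnm1E eq_sym (negbTE ja).
Qed.

Lemma edge_ideal_sign_contra q a b (t : R) :
  I ('X_b * t) -> ~ I ((-1) ^+ q * ('X_a * t) - 'X_a).
Proof.
rewrite ![_ * t]mulrC => /(edge_ideal_mcoeffU b); rewrite mcoeff_mulXU => t0.
move/(edge_ideal_mcoeffU a)/eqP; rewrite mcoeffB mcoeff_sign_mul mcoeff_mulXU t0.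
by rewrite mulr0 mcoeffXU eqxx sub0r oppr_eq0 oner_eq0.
Qed.

End EdgeIdeal.

Lemma disjoint_enum_cat (T : finType) (A B : {set T}) :
  B != set0 -> [disjoint A & B] ->
  exists s : nat -> T, [/\ forall i, (i < #|A|)%N -> s i \in A,
    forall i, (#|A| <= i)%N -> s i \in B &
    forall i j, (i < #|A| + #|B|)%N -> (j < #|A| + #|B|)%N -> s i = s j -> i = j].
Proof.
move=> /set0Pn [b0 b0B] AB; exists (nth b0 (enum A ++ enum B)).
have [sizeA sizeB] : size (enum A) = #|A| /\ size (enum B) = #|B| by rewrite -!cardE.
split=> [i iA | i Ai | i j iAB jAB].
- by rewrite nth_cat sizeA iA -mem_enum mem_nth ?sizeA.
- rewrite nth_cat sizeA ltnNge Ai /=.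
  have [iB|Bi] := ltnP (i - #|A|) #|B|; last by rewrite nth_default ?sizeB.
  by rewrite -mem_enum mem_nth ?sizeB.
have ABuniq : uniq (enum A ++ enum B).
  rewrite cat_uniq !enum_uniq andbT /=; apply/hasPn => x; rewrite !mem_enum.
  by apply: contraTN => xA; rewrite (disjointFr AB xA).
by move/eqP; rewrite nth_uniq ?size_cat ?sizeA ?sizeB // => /eqP.
Qed.

Lemma compl_induced_disconnected_split n (e : rel 'I_n) (W : {set 'I_n}) :
  compl_induced_disconnected e W ->
  exists A B : {set 'I_n}, [/\ A != set0, B != set0, [disjoint A & B],
    #|A| + #|B| = #|W| & {in A & B, forall a b, e a b}]%N.
Proof.
move=> [u [v [uW vW uv]]].
pose A := [set x in W | connect (compl_induced_adj e W) u x].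
have AW : A \subset W by apply/subsetP => x; rewrite inE => /andP [].
exists A, (W :\: A); split.
- by apply/set0Pn; exists u; rewrite inE uW connect0.
- by apply/set0Pn; exists v; rewrite !inE vW andbT (negbTE uv).
- by rewrite disjoint_sym disjoints_subset subsetDr.
- by rewrite -(cardsID A W) (setIidPr AW) addnC.
move=> a b aA; rewrite in_setD => /andP [bA bW]; apply/negPn/negP => eab.
have ab : a != b by apply: contraNneq bA => <-.
move: aA bA; rewrite !inE bW => /andP [aW ua] /negP; apply.
by apply: connect_trans ua (connect1 _); rewrite /compl_induced_adj aW bW ab eab.
Qed.

Lemma pd_ge_complete_bipartite (k : fieldType) n (e : rel 'I_n) (A B : {set 'I_n}) :
  A != set0 -> B != set0 -> [disjoint A & B] -> {in A & B, forall a b, e a b} ->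
  pd_ge (@edge_ideal k n e) (#|A| + #|B| - 1).
Proof.
move=> A0 B0 AB eAB m res; rewrite leqNgt; apply/negP => mAB.
have [s [sA sB s_inj]] := disjoint_enum_cat B0 AB.
have [p Ap] : exists p, #|A| = p.+1 by exists #|A|.-1; rewrite prednK // card_gt0.
have [q Bq] : exists q, #|B| = q.+1 by exists #|B|.-1; rewrite prednK // card_gt0.
rewrite Ap Bq addSn subn1 /= addnC in mAB; rewrite Ap Bq addnC in s_inj.
pose y i : {mpoly k[n]} := 'X_(s i).
have y_regular : regular_seq y (q.+1 + p.+1) := regular_seq_variables s_inj.
have yI j r : (p.+1 <= j)%N -> seq_ideal y p.+1 r -> edge_ideal e (y j * r).
  move=> pj; apply: edge_ideal_mul_seq_ideal => i ip.
  by apply: eAB; [apply: sA | apply: sB]; rewrite Ap.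
have z_deg := kdeg_ge_kwedge q.+1 (kdeg_ge_kdiff y (kdeg_ge_kvol _ p.+1)).
have z_cycle := kwedge_kvol_cycle (@edge_ideal0 k n e) (@edge_idealM k n e) yI q.+1.
have [u uI] := koszul_tor_vanishing y_regular (@edge_ideal0 k n e) (@edge_idealD k n e)
  (@edge_idealM k n e) res (leqnn _) mAB z_deg z_cycle.
have [uI_last uI_first] := kwedge_kvol_boundary_ktop uI.
exact: edge_ideal_sign_contra uI_last uI_first.
Qed.

Theorem theorem4p5 (k : fieldType) (n : nat) (e : rel 'I_n) (W : {set 'I_n}) :
  simple_graph e ->
  compl_induced_disconnected e W ->
  pd_ge (@edge_ideal k n e) (#|W| - 1).
Proof.
(* The argument works for any relation e. *)
move=> _ /compl_induced_disconnected_split [A [B [A0 B0 AB <- eAB]]].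
exact: pd_ge_complete_bipartite.
Qed.
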